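(* Let $k \in \mathbb N$, $T \leq +\infty$, $0 \leq t_1 < t_2 < T$ and $0 < R \leq 1$. Let $h, h_1, h_2 \in C^0([0,1] \times [0,T)) \cap C^{2,1}((0,1) \times (0,T))$ be classical solutions of $$u_t = u_{rr} + \frac{u_r}{r} - k^2 \frac{\sin(2u)}{2r^2}, \quad 0 < r < 1, \ 0 < t < T,$$ and assume that for each $i \in \{1,2\}$, either $h(0,t) \neq h_i(0,t)$ for all $t \in [0,T)$, or $h(0,t) = h_i(0,t) = m_i\pi \in \pi\mathbb Z$ for all $t \in [0,T)$. If $\Gamma$ is a non-empty (path-)connected component of $\{(r,t) \in [0,R] \times [t_1,t_2]: h_1 < h < h_2\}$ and if $$\max_{(r,t) \in \overline{\Gamma}} h_1 < C < \min_{(r,t) \in \overline{\Gamma}} h_2$$ for some $C \in \mathbb R$, then $$\Gamma \cap \left[ \{r = 0\} \cup \{r = R\} \cup \{t = t_1\} \right] \neq \emptyset.$$ Moreover, no matter $\Gamma$, all these hypotheses (including the existence of such $C$) are satisfied when $h$ is any such solution with $h(0,t) = 0$ for all $t \in [0,T)$, $h_1 = \pi/2$ or $h_1 = \chi_{\alpha}(r) = \pi - 2 \arctan(\alpha^k r^k)$ with $\alpha > 0$, and $h_2 = \pi$.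
   Context: $C^{2,1}$ means continuously differentiable in $t$ and twice continuously differentiable in $r$, with derivatives continuous up to the included boundary. Closures are taken in $\mathbb R^2$. *)

From Stdlib Require Import Reals Lra.
From Coquelicot Require Import Coquelicot.
Open Scope R_scope.

Definition dom_cl (T : Rbar) (r t : R) : Prop :=
  0 <= r <= 1 /\ 0 <= t /\ Rbar_lt (Finite t) T.

Definition dom_op (T : Rbar) (r t : R) : Prop :=
  0 < r < 1 /\ 0 < t /\ Rbar_lt (Finite t) T.

Definition cont2_on (D : R -> R -> Prop) (f : R -> R -> R) : Prop :=
  forall r t, D r t -> forall eps, 0 < eps -> exists delta, 0 < delta /\
    forall r' t', D r' t' -> Rabs (r' - r) < delta -> Rabs (t' - t) < delta ->
      Rabs (f r' t' - f r t) < eps.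

Definition classical_solution (k : nat) (T : Rbar) (h : R -> R -> R) : Prop :=
  cont2_on (dom_cl T) h /\
  exists hr hrr ht : R -> R -> R,
    (forall r t, dom_op T r t ->
       is_derive (fun s => h s t) r (hr r t) /\
       is_derive (fun s => hr s t) r (hrr r t) /\
       is_derive (fun s => h r s) t (ht r t)) /\
    cont2_on (dom_op T) h /\
    cont2_on (dom_op T) hr /\ cont2_on (dom_op T) hrr /\ cont2_on (dom_op T) ht /\
    (forall r t, dom_op T r t ->
       ht r t = hrr r t + hr r t / r - (INR k) ^ 2 * sin (2 * h r t) / (2 * r ^ 2)).

Definition axis_condition (T : Rbar) (h hi : R -> R -> R) : Prop :=
  (forall t, 0 <= t -> Rbar_lt (Finite t) T -> h 0 t <> hi 0 t) \/
  (exists m : Z, forall t, 0 <= t -> Rbar_lt (Finite t) T ->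
      h 0 t = IZR m * PI /\ hi 0 t = IZR m * PI).

Definition cont01 (p : R -> R) : Prop :=
  forall s, 0 <= s <= 1 -> forall eps, 0 < eps -> exists delta, 0 < delta /\
    forall s', 0 <= s' <= 1 -> Rabs (s' - s) < delta -> Rabs (p s' - p s) < eps.

Definition path_in (S : R -> R -> Prop) (a1 a2 b1 b2 : R) : Prop :=
  exists p1 p2 : R -> R, cont01 p1 /\ cont01 p2 /\
    p1 0 = a1 /\ p2 0 = a2 /\ p1 1 = b1 /\ p2 1 = b2 /\
    (forall s, 0 <= s <= 1 -> S (p1 s) (p2 s)).

Definition path_component (S G : R -> R -> Prop) : Prop :=
  (exists r t, G r t) /\
  (forall r t, G r t -> S r t) /\
  (forall a1 a2 b1 b2, G a1 a2 -> G b1 b2 -> path_in S a1 a2 b1 b2) /\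
  (forall a1 a2 b1 b2, G a1 a2 -> S b1 b2 -> path_in S a1 a2 b1 b2 -> G b1 b2).

Definition closure2 (G : R -> R -> Prop) (r t : R) : Prop :=
  forall eps, 0 < eps -> exists r' t', G r' t' /\ Rabs (r' - r) < eps /\ Rabs (t' - t) < eps.

Definition region (Rad t1 t2 : R) (h h1 h2 : R -> R -> R) (r t : R) : Prop :=
  0 <= r <= Rad /\ t1 <= t <= t2 /\ h1 r t < h r t /\ h r t < h2 r t.

Definition chi (k : nat) (alpha : R) (r t : R) : R :=
  PI - 2 * atan (alpha ^ k * r ^ k).

(* Suppose the component G avoids r = 0, r = Rad and t = t1.  Replacing (h, h1, h2, C)
   by (-h, -h2, -h1, -C) if necessary, some point of G lies below the level C at a time
   s before h first reaches C on the closure of G.  On the compact set K of points of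
   that closure with t <= s and h <= C one has h1 <= h < C < h2, so the points of K where
   h1 < h lie in G.  The maximum of e^(-lam t) (h - h1) over K is positive, hence is
   attained at a point of G with 0 < r < Rad and t > t1 which is a maximum over a backward
   neighbourhood: there (h - h1)_r = 0, (h - h1)_rr <= 0 and (h - h1)_t >= lam (h - h1),
   and the equation gives lam (h - h1) <= k^2 (sin 2h1 - sin 2h) / (2 r^2).  Near the axis
   the axis condition makes the right-hand side nonpositive (either K stays away from the
   axis, or h and h1 are both close to m pi, where sin 2u is increasing); away from it,
   at distance at least del, sin is 1-Lipschitz and lam = k^2 / del^2 + 1 is too large.

   For the second statement, pi/2, pi and chi_alpha are stationary solutions, and h1 is
   positive and below pi off the axis.  On the closure of G, h1 <= h, which vanishes on
   the axis, so the maximum of h1 there is attained off the axis and is below pi. *)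

From Stdlib Require Import Reals Lra Classical FunctionalExtensionality PropExtensionality.
From Coquelicot Require Import Coquelicot.
Open Scope R_scope.

Definition rect (a b c d r t : R) : Prop := a <= r <= b /\ c <= t <= d.

Definition closed2 (K : R -> R -> Prop) : Prop :=
  forall r t, closure2 K r t -> K r t.

Lemma Rabs_diag (x : R) : Rabs (x - x) = 0.
Proof. rewrite Rminus_diag; apply Rabs_R0. Qed.

Lemma cont2_on_joint_delta (D : R -> R -> Prop) (f g : R -> R -> R) r t e1 e2 :
  cont2_on D f -> cont2_on D g -> D r t -> 0 < e1 -> 0 < e2 ->
  exists d, 0 < d /\ forall r' t', D r' t' -> Rabs (r' - r) < d -> Rabs (t' - t) < d ->
    Rabs (f r' t' - f r t) < e1 /\ Rabs (g r' t' - g r t) < e2.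
Proof.
  intros Hf Hg Drt He1 He2.
  destruct (Hf r t Drt e1 He1) as [d1 [Hd1 P1]].
  destruct (Hg r t Drt e2 He2) as [d2 [Hd2 P2]].
  exists (Rmin d1 d2); split; [apply Rmin_pos; auto|].
  intros r' t' D' A1 A2.
  assert (M1 := Rmin_l d1 d2). assert (M2 := Rmin_r d1 d2).
  split; [apply P1 | apply P2]; auto; lra.
Qed.

Lemma cont2_restrict (D1 D2 : R -> R -> Prop) f :
  (forall r t, D1 r t -> D2 r t) -> cont2_on D2 f -> cont2_on D1 f.
Proof.
  intros H12 Hf r t D1rt eps Heps.
  destruct (Hf r t (H12 _ _ D1rt) eps Heps) as [d [Hd P]].
  exists d; split; auto.
Qed.

Lemma cont2_const D c : cont2_on D (fun _ _ => c).
Proof. intros r t _ eps Heps. exists 1. split; [lra|]. intros. rewrite Rabs_diag; auto. Qed.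

Lemma cont2_r D : cont2_on D (fun r _ => r).
Proof. intros r t _ eps Heps. exists eps. split; auto. Qed.

Lemma cont2_t D : cont2_on D (fun _ t => t).
Proof. intros r t _ eps Heps. exists eps. split; auto. Qed.

Lemma cont2_fun_r D (g : R -> R) :
  (forall r t, D r t -> continuity_pt g r) -> cont2_on D (fun r _ => g r).
Proof.
  intros Hg r t Drt eps Heps.
  destruct (Hg r t Drt eps Heps) as [d [Hd P]].
  exists d; split; auto. intros r' t' _ A1 _.
  destruct (Req_dec r' r) as [->|E]; [rewrite Rabs_diag; auto|].
  apply (P r'). split; [split; [exact I|auto]|]. exact A1.
Qed.

Lemma cont2_fun_t D (g : R -> R) :
  (forall r t, D r t -> continuity_pt g t) -> cont2_on D (fun _ t => g t).
Proof.
  intros Hg r t Drt eps Heps.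
  destruct (Hg r t Drt eps Heps) as [d [Hd P]].
  exists d; split; auto. intros r' t' _ _ A2.
  destruct (Req_dec t' t) as [->|E]; [rewrite Rabs_diag; auto|].
  apply (P t'). split; [split; [exact I|auto]|]. exact A2.
Qed.

Lemma cont2_opp D f : cont2_on D f -> cont2_on D (fun r t => - f r t).
Proof.
  intros Hf r t Drt eps Heps. destruct (Hf r t Drt eps Heps) as [d [Hd P]].
  exists d; split; auto. intros r' t' D' A1 A2.
  replace (- f r' t' - - f r t) with (- (f r' t' - f r t)) by ring.
  rewrite Rabs_Ropp; auto.
Qed.

Lemma cont2_abs D f : cont2_on D f -> cont2_on D (fun r t => Rabs (f r t)).
Proof.
  intros Hf r t Drt eps Heps. destruct (Hf r t Drt eps Heps) as [d [Hd P]].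
  exists d; split; auto. intros r' t' D' A1 A2.
  eapply Rle_lt_trans; [apply Rabs_triang_inv2|]. auto.
Qed.

Lemma cont2_minus D f g : cont2_on D f -> cont2_on D g -> cont2_on D (fun r t => f r t - g r t).
Proof.
  intros Hf Hg r t Drt eps Heps.
  destruct (cont2_on_joint_delta D f g r t (eps/2) (eps/2) Hf Hg Drt) as [d [Hd P]]; try lra.
  exists d. split; auto. intros r' t' D' A1 A2.
  destruct (P r' t' D' A1 A2) as [B1 B2].
  apply Rabs_def2 in B1. apply Rabs_def2 in B2. apply Rabs_def1; lra.
Qed.

Lemma cont2_mult D f g : cont2_on D f -> cont2_on D g -> cont2_on D (fun r t => f r t * g r t).
Proof.
  intros Hf Hg r t Drt eps Heps.
  set (a := Rabs (f r t)). set (b := Rabs (g r t)).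
  assert (Ha : 0 <= a) by apply Rabs_pos. assert (Hb : 0 <= b) by apply Rabs_pos.
  set (ef := Rmin 1 (eps / (2 * (b + 1)))). set (eg := eps / (2 * (a + 2))).
  assert (Hef : 0 < ef) by (apply Rmin_pos; [lra|apply Rdiv_lt_0_compat; lra]).
  assert (Hef1 : ef <= 1) by apply Rmin_l.
  assert (Hef2 : ef <= eps / (2 * (b + 1))) by apply Rmin_r.
  assert (Heg : 0 < eg) by (apply Rdiv_lt_0_compat; lra).
  destruct (cont2_on_joint_delta D f g r t ef eg Hf Hg Drt Hef Heg) as [d [Hd P]].
  exists d. split; auto. intros r' t' D' A1 A2.
  destruct (P r' t' D' A1 A2) as [B1 B2].
  replace (f r' t' * g r' t' - f r t * g r t) with
     (f r' t' * (g r' t' - g r t) + g r t * (f r' t' - f r t)) by ring.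
  eapply Rle_lt_trans; [apply Rabs_triang|]. rewrite !Rabs_mult.
  assert (F1 : Rabs (f r' t') <= a + 1).
  { replace (f r' t') with (f r t + (f r' t' - f r t)) by ring.
    eapply Rle_trans; [apply Rabs_triang|]. unfold a. lra. }
  assert (E1 : Rabs (f r' t') * Rabs (g r' t' - g r t) <= (a + 1) * eg)
    by (apply Rmult_le_compat; try apply Rabs_pos; lra).
  assert (E2 : b * Rabs (f r' t' - f r t) <= b * (eps / (2 * (b + 1))))
    by (apply Rmult_le_compat_l; lra).
  assert (E3 : (a + 1) * eg < eps / 2).
  { unfold eg. apply Rmult_lt_reg_r with (2 * (a + 2)); [lra|]. field_simplify; [nra|lra]. }
  assert (E4 : b * (eps / (2 * (b + 1))) < eps / 2).
  { apply Rmult_lt_reg_r with (2 * (b + 1)); [lra|]. field_simplify; [nra|lra]. }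
  fold b. lra.
Qed.

Lemma closure2_of (G : R -> R -> Prop) r t : G r t -> closure2 G r t.
Proof. intros HG eps Heps. exists r, t. rewrite !Rabs_diag. auto. Qed.

Lemma closure2_mono (A B : R -> R -> Prop) r t :
  (forall r t, A r t -> B r t) -> closure2 A r t -> closure2 B r t.
Proof.
  intros HAB HA eps Heps. destruct (HA eps Heps) as [r' [t' [H1 H2]]].
  exists r', t'; auto.
Qed.

Lemma closed2_closure2 (A : R -> R -> Prop) : closed2 (closure2 A).
Proof.
  intros r t HA eps Heps.
  destruct (HA (eps/2)) as [r' [t' [H1 [H2 H3]]]]; [lra|].
  destruct (H1 (eps/2)) as [r'' [t'' [H4 [H5 H6]]]]; [lra|].
  exists r'', t''. split; auto.
  apply Rabs_def2 in H2, H3, H5, H6. split; apply Rabs_def1; lra.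
Qed.

Lemma closure2_le (D G : R -> R -> Prop) (g1 g2 : R -> R -> R) r t :
  cont2_on D g1 -> cont2_on D g2 -> (forall r t, G r t -> D r t) -> D r t ->
  (forall r t, G r t -> g1 r t <= g2 r t) -> closure2 G r t -> g1 r t <= g2 r t.
Proof.
  intros c1 c2 GD Drt Hle Hcl.
  destruct (Rle_or_lt (g1 r t) (g2 r t)) as [H|H]; auto. exfalso.
  set (e := (g1 r t - g2 r t) / 2).
  destruct (cont2_on_joint_delta D g1 g2 r t e e c1 c2 Drt) as [d [Hd P]]; try (unfold e; lra).
  destruct (Hcl d Hd) as [r' [t' [G' [A1 A2]]]].
  destruct (P r' t' (GD _ _ G') A1 A2) as [B1 B2].
  assert (L := Hle r' t' G').
  apply Rabs_def2 in B1, B2. unfold e in *. lra.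
Qed.

Lemma closed2_le (K : R -> R -> Prop) (g1 g2 : R -> R -> R) :
  closed2 K -> cont2_on K g1 -> cont2_on K g2 ->
  closed2 (fun r t => K r t /\ g1 r t <= g2 r t).
Proof.
  intros Kc c1 c2 r t Hcl.
  assert (Krt : K r t) by (apply Kc; exact (closure2_mono _ _ r t (fun _ _ H => proj1 H) Hcl)).
  split; auto. apply (closure2_le K (fun r t => K r t /\ g1 r t <= g2 r t) g1 g2 r t c1 c2); auto.
  - intros ? ? []; auto.
  - intros ? ? []; auto.
Qed.

Lemma closure2_rect (G : R -> R -> Prop) a b c d r t :
  (forall r t, G r t -> rect a b c d r t) -> closure2 G r t -> rect a b c d r t.
Proof.
  intros HG Hcl.
  assert (Le : forall g1 g2 : R -> R -> R, cont2_on (fun _ _ => True) g1 ->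
             cont2_on (fun _ _ => True) g2 -> (forall r t, G r t -> g1 r t <= g2 r t) ->
             g1 r t <= g2 r t)
    by (intros g1 g2 c1 c2 H; exact (closure2_le _ G g1 g2 r t c1 c2 (fun _ _ _ => I) I H Hcl)).
  assert (Bd : forall r' t', G r' t' -> (a <= r' <= b) /\ (c <= t' <= d)) by exact HG.
  split; split.
  - apply (Le (fun _ _ => a) (fun r _ => r)); [apply cont2_const|apply cont2_r|apply Bd].
  - apply (Le (fun r _ => r) (fun _ _ => b)); [apply cont2_r|apply cont2_const|apply Bd].
  - apply (Le (fun _ _ => c) (fun _ t => t)); [apply cont2_const|apply cont2_t|apply Bd].
  - apply (Le (fun _ t => t) (fun _ _ => d)); [apply cont2_t|apply cont2_const|apply Bd].
Qed.

Module ExtremeValue.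
From HB Require Import structures.
From mathcomp Require Import all_boot all_order all_algebra all_classical all_reals.
From mathcomp Require Import topology normedtype derive.
From mathcomp Require Import Rstruct Rstruct_topology.
Import Order.TTheory GRing.Theory Num.Theory.
Local Open Scope classical_set_scope.

Lemma cont2_on_attains_max (K : R -> R -> Prop) (f : R -> R -> R) (a b c d : R) :
  (exists r t, K r t) -> (forall r t, K r t -> rect a b c d r t) -> closed2 K ->
  cont2_on K f -> exists r t, K r t /\ forall r' t', K r' t' -> Rle (f r' t') (f r t).
Proof.
move=> [r0 [t0 K0]] Kb Kc fc.
set A : set (R * R)%type := [set z | K z.1 z.2].
set F : (R * R)%type -> R := fun z => f z.1 z.2.
have A0 : A !=set0 by exists (r0, t0).
have cA : compact A.
  apply: (@subclosed_compact _ A (`[a, b] `*` `[c, d])).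
  - move=> [r t] /= Hcl; apply: Kc => eps eps0.
    have : nbhs (r, t) [set z : R * R | ball r eps z.1 /\ ball t eps z.2].
      apply/nbhs_ballP; exists eps; first by apply/RltP.
      by move=> [y1 y2] /= [h1 h2]; split.
    move=> /Hcl [[r' t'] [/= Ar' [/= b1 b2]]].
    exists r', t'; split => //.
    move: b1 b2; rewrite /ball /= => /RltP b1 /RltP b2.
    by rewrite -Rabs_Ropp Ropp_minus_distr -[Rabs (t' - t)]Rabs_Ropp Ropp_minus_distr.
  - by apply: compact_setX; apply: segment_compact.
  - move=> [r t] /= /Kb [[h1 h2] [h3 h4]].
    by split; rewrite /= in_itv /=; apply/andP; split; apply/RleP.
have cF : {within A, continuous F}.
  apply/subspace_continuousP => [[r t]] /= Art.
  apply/cvg_ballP => eps /RltP eps0.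
  have [delta [d0 Hd]] := fc r t Art eps eps0.
  rewrite near_withinE; apply/nbhs_ballP; exists delta; first by apply/RltP.
  move=> [y1 y2] /= [b1 b2] Ay.
  move: b1 b2; rewrite /ball /= => /RltP b1 /RltP b2.
  apply/RltP; rewrite /F /from_subspace /=.
  change (Rlt (Rabs (f r t - f y1 y2)) eps).
  change (Rlt (Rabs (r - y1)) delta) in b1.
  change (Rlt (Rabs (t - y2)) delta) in b2.
  rewrite -Rabs_Ropp Ropp_minus_distr; apply: Hd => //.
    by rewrite -Rabs_Ropp Ropp_minus_distr.
  by rewrite -Rabs_Ropp Ropp_minus_distr.
have [[r t] /set_mem Art Fmax] := compact_EVT_max A0 cA cF.
exists r, t; split => // r' t' K'; apply/RleP; apply: (Fmax (r', t')).
by rewrite inE.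
Qed.

End ExtremeValue.
Import ExtremeValue.

Lemma cont2_on_attains_min (K : R -> R -> Prop) (f : R -> R -> R) (a b c d : R) :
  (exists r t, K r t) -> (forall r t, K r t -> rect a b c d r t) -> closed2 K ->
  cont2_on K f -> exists r t, K r t /\ forall r' t', K r' t' -> f r t <= f r' t'.
Proof.
  intros Kne Kb Kc fc.
  destruct (cont2_on_attains_max K _ a b c d Kne Kb Kc (cont2_opp K f fc)) as [r [t [Krt P]]].
  exists r, t; split; auto. intros r' t' K'. specialize (P r' t' K'). lra.
Qed.

Lemma convex_comb_between lo hi a b s : lo <= a <= hi -> lo <= b <= hi -> 0 <= s <= 1 ->
  lo <= a + s * (b - a) <= hi.
Proof. intros. split; nra. Qed.

Lemma convex_comb_dist a b z d s : Rabs (a - z) < d -> Rabs (b - z) < d -> 0 <= s <= 1 ->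
  Rabs (a + s * (b - a) - z) < d.
Proof.
  intros Ha Hb Hs. apply Rabs_def2 in Ha, Hb.
  replace (a + s * (b - a) - z) with ((1 - s) * (a - z) + s * (b - z)) by ring.
  assert (0 <= (1 - s) * (d - (a - z))) by (apply Rmult_le_pos; lra).
  assert (0 <= (1 - s) * (d + (a - z))) by (apply Rmult_le_pos; lra).
  destruct (Req_dec s 0) as [->|Hs0]; [apply Rabs_def1; lra|].
  assert (0 < s * (d - (b - z))) by (apply Rmult_lt_0_compat; lra).
  assert (0 < s * (d + (b - z))) by (apply Rmult_lt_0_compat; lra).
  apply Rabs_def1; nra.
Qed.

Lemma segment_cont01 a b : cont01 (fun s => a + s * (b - a)).
Proof.
  intros s Hs eps Heps. exists (eps / (Rabs (b - a) + 1)).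
  assert (P : 0 <= Rabs (b - a)) by apply Rabs_pos.
  split; [apply Rdiv_lt_0_compat; lra|].
  intros s' Hs' Hd.
  replace (a + s' * (b - a) - (a + s * (b - a))) with ((s' - s) * (b - a)) by ring.
  rewrite Rabs_mult.
  apply Rle_lt_trans with ((eps / (Rabs (b - a) + 1)) * Rabs (b - a)).
  - apply Rmult_le_compat_r; lra.
  - apply Rmult_lt_reg_r with (Rabs (b - a) + 1); [lra|]. field_simplify; [nra|lra].
Qed.

Lemma segment_path (S : R -> R -> Prop) a1 a2 b1 b2 :
  (forall s, 0 <= s <= 1 -> S (a1 + s * (b1 - a1)) (a2 + s * (b2 - a2))) ->
  path_in S a1 a2 b1 b2.
Proof.
  intros HS. exists (fun s => a1 + s * (b1 - a1)), (fun s => a2 + s * (b2 - a2)).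
  repeat split; try apply segment_cont01; try ring. exact HS.
Qed.

Lemma path_in_end (S : R -> R -> Prop) a1 a2 b1 b2 : path_in S a1 a2 b1 b2 -> S b1 b2.
Proof.
  intros [p1 [p2 [_ [_ [_ [_ [<- [<- P]]]]]]]]. apply P; lra.
Qed.

Lemma rect_dom_cl (T : Rbar) (Rad t1 t2 r t : R) : 0 <= t1 -> Rbar_lt t2 T -> Rad <= 1 ->
  rect 0 Rad t1 t2 r t -> dom_cl T r t.
Proof.
  intros H1 H2 H3 [[A B] [C D]]. split; [lra|split; [lra|]].
  apply Rbar_le_lt_trans with (Finite t2); [simpl; lra|auto].
Qed.

Lemma region_rect Rad t1 t2 h h1 h2 r t :
  region Rad t1 t2 h h1 h2 r t -> rect 0 Rad t1 t2 r t.
Proof. intros [A [B _]]; split; auto. Qed.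

Section RegionTopology.

Variables (Rad t1 t2 : R) (h h1 h2 : R -> R -> R).
Hypotheses (ch : cont2_on (rect 0 Rad t1 t2) h) (ch1 : cont2_on (rect 0 Rad t1 t2) h1)
  (ch2 : cont2_on (rect 0 Rad t1 t2) h2).

Local Notation Q := (rect 0 Rad t1 t2).
Local Notation Reg := (region Rad t1 t2 h h1 h2).

Lemma region_nbhd r0 t0 : Reg r0 t0 ->
  exists d, 0 < d /\ forall r t, Q r t -> Rabs (r - r0) < d -> Rabs (t - t0) < d -> Reg r t.
Proof.
  intros Hs. assert (Hq := region_rect _ _ _ _ _ _ _ _ Hs).
  destruct Hs as [_ [_ [L1 L2]]].
  set (e := Rmin (h r0 t0 - h1 r0 t0) (h2 r0 t0 - h r0 t0) / 2).
  assert (M1 := Rmin_l (h r0 t0 - h1 r0 t0) (h2 r0 t0 - h r0 t0)).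
  assert (M2 := Rmin_r (h r0 t0 - h1 r0 t0) (h2 r0 t0 - h r0 t0)).
  assert (He : 0 < e) by (unfold e; apply Rmin_case; lra).
  destruct (cont2_on_joint_delta Q h1 h2 r0 t0 e e ch1 ch2 Hq He He) as [d1 [Hd1 P1]].
  destruct (ch r0 t0 Hq e He) as [d2 [Hd2 P2]].
  exists (Rmin d1 d2). split; [apply Rmin_pos; auto|].
  intros r t Hrt A1 A2.
  assert (N1 := Rmin_l d1 d2). assert (N2 := Rmin_r d1 d2).
  destruct (P1 r t Hrt ltac:(lra) ltac:(lra)) as [B1 B2].
  assert (B := P2 r t Hrt ltac:(lra) ltac:(lra)).
  apply Rabs_def2 in B, B1, B2.
  destruct Hrt. unfold e in *. repeat split; auto; lra.
Qed.

Lemma region_path_near r0 t0 : Reg r0 t0 ->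
  exists d, 0 < d /\ forall a1 a2 b1 b2, Q a1 a2 -> Q b1 b2 ->
     Rabs (a1 - r0) < d -> Rabs (a2 - t0) < d -> Rabs (b1 - r0) < d -> Rabs (b2 - t0) < d ->
     path_in Reg a1 a2 b1 b2.
Proof.
  intros Hs. destruct (region_nbhd r0 t0 Hs) as [d [Hd P]].
  exists d. split; auto. intros a1 a2 b1 b2 [Ha1 Ha2] [Hb1 Hb2] D1 D2 D3 D4.
  apply segment_path. intros s Hs01. apply P.
  - split; apply convex_comb_between; auto.
  - apply convex_comb_dist; auto.
  - apply convex_comb_dist; auto.
Qed.

Lemma path_component_nbhd G r0 t0 : path_component Reg G -> G r0 t0 ->
  exists d, 0 < d /\ forall r t, Q r t -> Rabs (r - r0) < d -> Rabs (t - t0) < d -> G r t.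
Proof.
  intros [_ [GS [_ Gc]]] G0.
  destruct (region_path_near r0 t0 (GS _ _ G0)) as [d [Hd P]].
  exists d. split; auto. intros r t Hrt A1 A2.
  assert (Path : path_in Reg r0 t0 r t)
    by (apply P; auto; [exact (region_rect _ _ _ _ _ _ _ _ (GS _ _ G0))|rewrite Rabs_diag; auto..]).
  exact (Gc r0 t0 r t G0 (path_in_end _ _ _ _ _ Path) Path).
Qed.

Lemma path_component_closure G r0 t0 : path_component Reg G ->
  closure2 G r0 t0 -> Reg r0 t0 -> G r0 t0.
Proof.
  intros [_ [GS [_ Gc]]] Hcl Hs.
  destruct (region_path_near r0 t0 Hs) as [d [Hd P]].
  destruct (Hcl d Hd) as [r [t [Grt [A1 A2]]]].
  apply Gc with r t; auto.
  apply P; auto; [exact (region_rect _ _ _ _ _ _ _ _ (GS _ _ Grt))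
                 |exact (region_rect _ _ _ _ _ _ _ _ Hs)|rewrite Rabs_diag; auto..].
Qed.

End RegionTopology.

Lemma ex_derive_continuity_pt (g : R -> R) x : ex_derive g x -> continuity_pt g x.
Proof. intros H. apply continuity_pt_filterlim, (ex_derive_continuous g x H). Qed.

Lemma derive_nonpos_of_right_max (g : R -> R) x l d :
  is_derive g x l -> 0 < d -> (forall y, x <= y < x + d -> g y <= g x) -> l <= 0.
Proof.
  intros Hd Hdp Hm. apply is_derive_Reals in Hd.
  destruct (Rle_or_lt l 0) as [H|H]; auto. exfalso.
  destruct (Hd l H) as [[e He] P]; simpl in P.
  set (y := Rmin (d / 2) (e / 2)).
  assert (M1 := Rmin_l (d / 2) (e / 2)). assert (M2 := Rmin_r (d / 2) (e / 2)).
  assert (Hy : 0 < y) by (apply Rmin_pos; lra). fold y in M1, M2.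
  specialize (P y ltac:(lra) ltac:(rewrite Rabs_pos_eq; lra)).
  set (q := (g (x + y) - g x) / y) in P.
  assert (E : g (x + y) - g x = q * y) by (unfold q; field; lra).
  assert (Hq : 0 < q) by (apply Rabs_def2 in P; lra).
  assert (g (x + y) <= g x) by (apply Hm; lra).
  assert (0 < q * y) by (apply Rmult_lt_0_compat; auto). lra.
Qed.

Lemma derive_nonneg_of_left_max (g : R -> R) x l d :
  is_derive g x l -> 0 < d -> (forall y, x - d < y <= x -> g y <= g x) -> 0 <= l.
Proof.
  intros Hd Hdp Hm.
  assert (Hd' : is_derive (fun y => g (- y)) (- x) (- l)).
  { replace (- l) with (-1 * l) by ring.
    apply (is_derive_comp g Ropp (- x) l (-1)).
    - rewrite Ropp_involutive; exact Hd.
    - auto_derive; auto. }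
  enough (- l <= 0) by lra.
  apply (derive_nonpos_of_right_max _ (- x) (- l) d Hd' Hdp).
  intros y Hy. rewrite Ropp_involutive. apply Hm; lra.
Qed.

Lemma derive_pos_right_of_zero (g : R -> R) x l :
  is_derive g x l -> 0 < l -> g x = 0 ->
  exists e, 0 < e /\ forall y, x < y < x + e -> 0 < g y.
Proof.
  intros Hd Hl H0. apply is_derive_Reals in Hd.
  destruct (Hd l Hl) as [[e He] P]; simpl in P. exists e. split; auto.
  intros y Hy. specialize (P (y - x) ltac:(lra) ltac:(rewrite Rabs_pos_eq; lra)).
  replace (x + (y - x)) with y in P by ring. rewrite H0, Rminus_0_r in P.
  set (q := g y / (y - x)) in P.
  assert (E : g y = q * (y - x)) by (unfold q; field; lra).
  assert (Hq : 0 < q) by (apply Rabs_def2 in P; lra).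
  rewrite E. apply Rmult_lt_0_compat; lra.
Qed.

Lemma local_max_derive2 (g g' : R -> R) x g'' d :
  0 < d ->
  (forall y, Rabs (y - x) < d -> is_derive g y (g' y)) -> is_derive g' x g'' ->
  (forall y, Rabs (y - x) < d -> g y <= g x) -> g' x = 0 /\ g'' <= 0.
Proof.
  intros Hd Hg Hg' Hm.
  assert (Hx : Rabs (x - x) < d) by (rewrite Rabs_diag; auto).
  assert (Z : g' x = 0).
  { apply Rle_antisym.
    - apply (derive_nonpos_of_right_max g x (g' x) d (Hg x Hx) Hd).
      intros y Hy; apply Hm; rewrite Rabs_pos_eq; lra.
    - apply (derive_nonneg_of_left_max g x (g' x) d (Hg x Hx) Hd).
      intros y Hy; apply Hm; rewrite Rabs_left1; lra. }
  split; auto.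
  destruct (Rle_or_lt g'' 0) as [H|H]; auto. exfalso.
  (* [g'] vanishes at [x] and increases there, so [g] increases just right of [x] *)
  destruct (derive_pos_right_of_zero g' x g'' Hg' H Z) as [e [He Pe]].
  set (b := x + Rmin d e / 2).
  assert (M1 := Rmin_l d e). assert (M2 := Rmin_r d e).
  assert (Mp : 0 < Rmin d e) by (apply Rmin_pos; lra).
  destruct (MVT_cor2 g g' x b ltac:(unfold b; lra)) as [c [E Hc]].
  { intros y Hy. apply is_derive_Reals, Hg. rewrite Rabs_pos_eq; unfold b in *; lra. }
  assert (0 < g' c) by (apply Pe; unfold b in *; lra).
  assert (g b <= g x) by (apply Hm; rewrite Rabs_pos_eq; unfold b; lra).
  assert (0 < g' c * (b - x)) by (apply Rmult_lt_0_compat; unfold b in *; lra).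
  lra.
Qed.

Lemma exp_weighted_left_max (w : R -> R) (lam t0 w' d : R) :
  is_derive w t0 w' -> 0 < d ->
  (forall t, t0 - d < t <= t0 -> exp (- (lam * t)) * w t <= exp (- (lam * t0)) * w t0) ->
  lam * w t0 <= w'.
Proof.
  intros Hw Hd Hm.
  assert (Hphi : is_derive (fun t => exp (- (lam * t)) * w t) t0
                   (- lam * exp (- (lam * t0)) * w t0 + exp (- (lam * t0)) * w')).
  { apply (is_derive_mult (fun t => exp (- (lam * t))) w); auto.
    - auto_derive; auto. ring.
    - intros; apply Rmult_comm. }
  assert (P := derive_nonneg_of_left_max _ t0 _ d Hphi Hd Hm).
  assert (E := exp_pos (- (lam * t0))).
  apply Rmult_le_reg_l with (exp (- (lam * t0))); auto. lra.
Qed.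

Lemma sin_sub_le (a b : R) : sin a - sin b <= Rabs (a - b).
Proof.
  destruct (MVT_abs sin cos b a) as [c [E _]].
  { intros c _. apply derivable_pt_lim_sin. }
  eapply Rle_trans; [apply RRle_abs|]. rewrite E.
  rewrite <- (Rmult_1_l (Rabs (a - b))) at 2.
  apply Rmult_le_compat_r; [apply Rabs_pos|]. apply Rabs_le, COS_bound.
Qed.

Lemma sin_double_le_near (m : Z) x y :
  Rabs (x - IZR m * PI) < PI / 4 -> Rabs (y - IZR m * PI) < PI / 4 -> y <= x ->
  sin (2 * y) <= sin (2 * x).
Proof.
  assert (Shift : forall z, sin (2 * z) = sin (2 * (z - IZR m * PI))).
  { intros z. replace (2 * z) with (2 * (z - IZR m * PI) + 2 * (IZR m * PI)) at 1 by ring.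
    rewrite sin_plus, (sin_2a (IZR m * PI)), (cos_2a_sin (IZR m * PI)).
    rewrite (sin_eq_0_1 (IZR m * PI)) by (exists m; reflexivity). ring. }
  intros Hx Hy Hyx. rewrite (Shift x), (Shift y).
  apply Rabs_def2 in Hx, Hy. apply sin_incr_1; lra.
Qed.

Lemma reaction_lt_gap (kk del r x x1 : R) :
  0 < del -> 0 < r -> x1 < x -> (r < del -> sin (2 * x1) <= sin (2 * x)) ->
  kk ^ 2 * (sin (2 * x1) - sin (2 * x)) / (2 * r ^ 2) < (kk ^ 2 / del ^ 2 + 1) * (x - x1).
Proof.
  intros Hdel Hr Hx Hsin.
  set (L := kk ^ 2 * (sin (2 * x1) - sin (2 * x)) / (2 * r ^ 2)).
  set (M := kk ^ 2 / del ^ 2).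
  assert (Hk : 0 <= kk ^ 2) by apply pow2_ge_0.
  assert (Hr2 : 0 < r ^ 2) by (apply pow_lt; lra).
  assert (Hd2 : 0 < del ^ 2) by (apply pow_lt; lra).
  assert (HL : L * (2 * r ^ 2) = kk ^ 2 * (sin (2 * x1) - sin (2 * x))) by (unfold L; field; lra).
  assert (HM : M * del ^ 2 = kk ^ 2) by (unfold M; field; lra).
  assert (HM0 : 0 <= M) by (unfold M; apply Rmult_le_pos; [lra|left; apply Rinv_0_lt_compat; lra]).
  assert (HxM : 0 <= M * (x - x1)) by (apply Rmult_le_pos; lra).
  enough (L <= M * (x - x1)) by lra.
  destruct (Rlt_or_le r del) as [Lt|Ge].
  - assert (kk ^ 2 * (sin (2 * x1) - sin (2 * x)) <= 0)
      by (specialize (Hsin Lt); nra).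
    nra.
  - assert (Hs : sin (2 * x1) - sin (2 * x) <= 2 * (x - x1)).
    { assert (S := sin_sub_le (2 * x1) (2 * x)). rewrite Rabs_left in S; lra. }
    assert (Hdr : del ^ 2 <= r ^ 2) by (apply pow_incr; lra).
    assert (L * (2 * r ^ 2) <= 2 * (M * r ^ 2) * (x - x1)).
    { rewrite HL. apply Rle_trans with (kk ^ 2 * (2 * (x - x1))); [apply Rmult_le_compat_l; auto|].
      rewrite <- HM. nra. }
    nra.
Qed.

Definition weighted_gap (lam : R) (h h1 : R -> R -> R) (r t : R) : R :=
  exp (- (lam * t)) * (h r t - h1 r t).

Lemma weighted_gap_no_backward_max k T h h1 del rs ts d :
  classical_solution k T h -> classical_solution k T h1 ->
  0 < del -> dom_op T rs ts -> 0 < d -> h1 rs ts < h rs ts ->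
  (rs < del -> sin (2 * h1 rs ts) <= sin (2 * h rs ts)) ->
  (forall r t, Rabs (r - rs) < d -> Rabs (t - ts) < d -> t <= ts ->
     weighted_gap (INR k ^ 2 / del ^ 2 + 1) h h1 r t
     <= weighted_gap (INR k ^ 2 / del ^ 2 + 1) h h1 rs ts) ->
  False.
Proof.
  intros [_ [hr [hrr [ht [Hd [_ [_ [_ [_ Hpde]]]]]]]]]
         [_ [h1r [h1rr [h1t [Hd1 [_ [_ [_ [_ Hpde1]]]]]]]]]
         Hdel Hdom Hd0 Hlt Hsin Hmax.
  set (lam := INR k ^ 2 / del ^ 2 + 1) in Hmax.
  destruct Hdom as [[R0 R1] [T0 TT]].
  set (d' := Rmin d (Rmin rs (1 - rs))).
  assert (M1 := Rmin_l d (Rmin rs (1 - rs))). assert (M2 := Rmin_r d (Rmin rs (1 - rs))).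
  assert (M3 := Rmin_l rs (1 - rs)). assert (M4 := Rmin_r rs (1 - rs)).
  fold d' in M1, M2.
  assert (Hd' : 0 < d') by (unfold d'; repeat apply Rmin_pos; lra).
  assert (Dop : forall y, Rabs (y - rs) < d' -> dom_op T y ts)
    by (intros y Hy; apply Rabs_def2 in Hy; repeat split; auto; lra).
  assert (Hrs : Rabs (rs - rs) < d') by (rewrite Rabs_diag; auto).
  assert (Hts : Rabs (ts - ts) < d') by (rewrite Rabs_diag; auto).
  destruct (local_max_derive2 (fun y => h y ts - h1 y ts) (fun y => hr y ts - h1r y ts) rs
              (hrr rs ts - h1rr rs ts) d' Hd') as [Zr Zrr].
  { intros y Hy. exact (is_derive_minus _ _ _ _ _ (proj1 (Hd y ts (Dop y Hy)))
                                             (proj1 (Hd1 y ts (Dop y Hy)))). }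
  { exact (is_derive_minus _ _ _ _ _ (proj1 (proj2 (Hd rs ts (Dop rs Hrs))))
                                     (proj1 (proj2 (Hd1 rs ts (Dop rs Hrs))))). }
  { intros y Hy. apply Rmult_le_reg_l with (exp (- (lam * ts))); [apply exp_pos|].
    apply (Hmax y ts); lra. }
  assert (Zt : lam * (h rs ts - h1 rs ts) <= ht rs ts - h1t rs ts).
  { apply (exp_weighted_left_max (fun t => h rs t - h1 rs t) lam ts _ d').
    - exact (is_derive_minus _ _ _ _ _ (proj2 (proj2 (Hd rs ts (Dop rs Hrs))))
                                       (proj2 (proj2 (Hd1 rs ts (Dop rs Hrs))))).
    - exact Hd'.
    - intros t Ht. apply (Hmax rs t); [lra|apply Rabs_def1; lra|lra]. }
  assert (Pde : ht rs ts - h1t rs ts = (hrr rs ts - h1rr rs ts) + (hr rs ts - h1r rs ts) / rs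
                 + INR k ^ 2 * (sin (2 * h1 rs ts) - sin (2 * h rs ts)) / (2 * rs ^ 2)).
  { rewrite (Hpde rs ts (Dop rs Hrs)), (Hpde1 rs ts (Dop rs Hrs)). field. lra. }
  simpl in Zr. rewrite Zr in Pde. unfold Rdiv at 1 in Pde. rewrite Rmult_0_l in Pde.
  assert (Gap := reaction_lt_gap (INR k) del rs (h rs ts) (h1 rs ts) Hdel R0 Hlt Hsin).
  fold lam in Gap. lra.
Qed.

Lemma off_axis_margin (K : R -> R -> Prop) b c d :
  closed2 K -> (forall r t, K r t -> rect 0 b c d r t) -> (forall t, ~ K 0 t) ->
  exists del, 0 < del /\ forall r t, K r t -> del <= r.
Proof.
  intros Kc Kb Kaxis.
  destruct (classic (exists r t, K r t)) as [Kne|Kempty].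
  - destruct (cont2_on_attains_min K (fun r _ => r) 0 b c d Kne Kb Kc (cont2_r K))
      as [r0 [t0 [K0 P]]].
    exists r0. split; auto.
    destruct (Kb r0 t0 K0) as [[[Hr0|Hr0] _] _]; auto.
    subst r0. contradiction (Kaxis t0 K0).
  - exists 1. split; [lra|]. intros r t Krt. exfalso. apply Kempty. exists r, t. exact Krt.
Qed.

Lemma axis_sin_margin (T : Rbar) (h h1 : R -> R -> R) (K : R -> R -> Prop) (b c d : R) :
  0 <= c -> Rbar_lt d T -> closed2 K -> (forall r t, K r t -> rect 0 b c d r t) ->
  cont2_on K h -> cont2_on K h1 -> axis_condition T h h1 ->
  (forall r t, K r t -> h1 r t <= h r t) -> (forall t, K 0 t -> h 0 t = h1 0 t) ->
  exists del, 0 < del /\ forall r t, K r t -> r < del -> sin (2 * h1 r t) <= sin (2 * h r t).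
Proof.
  intros Hc Hd Kc Kb ch ch1 Hax Hle Haxis.
  assert (InT : forall t, K 0 t -> 0 <= t /\ Rbar_lt t T).
  { intros t K0. destruct (Kb 0 t K0) as [_ [Ht1 Ht2]]. split; [lra|].
    apply Rbar_le_lt_trans with (Finite d); [simpl; lra|auto]. }
  destruct Hax as [Ne | [m Eq]].
  - destruct (off_axis_margin K b c d Kc Kb) as [del [Hdel P]].
    { intros t K0. destruct (InT t K0) as [Ht HT]. exact (Ne t Ht HT (Haxis t K0)). }
    exists del. split; auto. intros r t Krt Hr. specialize (P r t Krt). lra.
  - set (Far := fun f r t => K r t /\ PI / 4 <= Rabs (f r t - IZR m * PI)).
    assert (Margin : forall f, cont2_on K f -> (forall t, K 0 t -> f 0 t = IZR m * PI) ->
              exists del, 0 < del /\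
                forall r t, K r t -> r < del -> Rabs (f r t - IZR m * PI) < PI / 4).
    { intros f cf Hf.
      destruct (off_axis_margin (Far f) b c d) as [del [Hdel P]].
      - apply closed2_le; auto;
          [apply cont2_const|apply cont2_abs, cont2_minus; auto; apply cont2_const].
      - intros r t [Krt _]; auto.
      - intros t [K0 Hfar]. rewrite (Hf t K0), Rabs_diag in Hfar.
        assert (PI > 0) by apply PI_RGT_0. lra.
      - exists del. split; auto. intros r t Krt Hr.
        destruct (Rlt_or_le (Rabs (f r t - IZR m * PI)) (PI / 4)) as [Near|Far']; auto.
        specialize (P r t (conj Krt Far')). lra. }
    destruct (Margin h ch) as [d1 [Hd1 P1]].
    { intros t K0. destruct (InT t K0) as [Ht HT]. exact (proj1 (Eq t Ht HT)). }
    destruct (Margin h1 ch1) as [d2 [Hd2 P2]].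
    { intros t K0. destruct (InT t K0) as [Ht HT]. exact (proj2 (Eq t Ht HT)). }
    exists (Rmin d1 d2). split; [apply Rmin_pos; auto|].
    intros r t Krt Hr. assert (N1 := Rmin_l d1 d2). assert (N2 := Rmin_r d1 d2).
    apply (sin_double_le_near m); [apply P1|apply P2|apply Hle]; auto; lra.
Qed.

Lemma level_free_time Rad t1 t2 h h1 h2 G C :
  cont2_on (rect 0 Rad t1 t2) h -> cont2_on (rect 0 Rad t1 t2) h1 ->
  cont2_on (rect 0 Rad t1 t2) h2 -> path_component (region Rad t1 t2 h h1 h2) G ->
  (forall r t, closure2 G r t -> h1 r t < C) -> (forall r t, closure2 G r t -> C < h2 r t) ->
  (forall r t, G r t -> t <> t1) ->
  exists s rq tq, G rq tq /\ tq <= s /\ forall r t, closure2 G r t -> t <= s -> h r t <> C.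
Proof.
  intros ch ch1 ch2 HG HC1 HC2 Hno.
  assert (HG' := HG). destruct HG' as [[rq [tq Gq]] [GS _]].
  assert (GQ : forall r t, G r t -> rect 0 Rad t1 t2 r t)
    by (intros r t Grt; exact (region_rect _ _ _ _ _ _ _ _ (GS r t Grt))).
  assert (clGQ : forall r t, closure2 G r t -> rect 0 Rad t1 t2 r t)
    by (intros r t; apply closure2_rect; auto).
  (* s is taken just before the first time at which h reaches C on the closure of G *)
  set (E := fun r t => (closure2 G r t /\ h r t <= C) /\ C <= h r t).
  destruct (classic (exists r t, E r t)) as [Ene|Ene].
  - assert (chG : cont2_on (closure2 G) h) by (exact (cont2_restrict _ _ h clGQ ch)).
    assert (Ec : closed2 E).
    { assert (Ec1 := closed2_le _ h (fun _ _ => C) (closed2_closure2 G) chG (cont2_const _ C)).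
      exact (closed2_le _ (fun _ _ => C) h Ec1 (cont2_const _ C)
               (cont2_restrict _ _ h (fun r t H => proj1 H) chG)). }
    destruct (cont2_on_attains_min E (fun _ t => t) 0 Rad t1 t2 Ene
                ltac:(intros r t [[H _] _]; auto) Ec (cont2_t E)) as [rc [tau [Ec0 Pmin]]].
    destruct Ec0 as [[Gcl Le] Ge].
    assert (Gc : G rc tau).
    { apply (path_component_closure Rad t1 t2 h h1 h2 ch ch1 ch2 G rc tau HG Gcl).
      destruct (clGQ _ _ Gcl) as [Hr Ht].
      assert (HC1' := HC1 _ _ Gcl). assert (HC2' := HC2 _ _ Gcl).
      repeat split; auto; lra. }
    destruct (clGQ _ _ Gcl) as [[R1 R2] [T1 T2]].
    assert (Htau : t1 < tau)
      by (destruct T1 as [T1|T1]; auto; subst; exfalso; exact (Hno _ _ Gc eq_refl)).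
    destruct (path_component_nbhd Rad t1 t2 h h1 h2 ch ch1 ch2 G rc tau HG Gc) as [d [Hd P]].
    set (eps := Rmin d (tau - t1) / 2).
    assert (M1 := Rmin_l d (tau - t1)). assert (M2 := Rmin_r d (tau - t1)).
    assert (Mp : 0 < Rmin d (tau - t1)) by (apply Rmin_pos; lra).
    exists (tau - eps), rc, (tau - eps). split; [|split; [lra|]].
    + apply P; [repeat split; unfold eps in *; lra|rewrite Rabs_diag; auto|].
      replace (tau - eps - tau) with (- eps) by ring.
      rewrite Rabs_Ropp, Rabs_pos_eq; unfold eps in *; lra.
    + intros r t Hcl Hle Heq.
      assert (Pm := Pmin r t ltac:(repeat split; auto; lra)). unfold eps in *. lra.
  - exists t2, rq, tq. split; [auto|split].
    + destruct (GQ _ _ Gq) as [_ [_ ?]]; auto.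
    + intros r t Hcl _ Heq. apply Ene. exists r, t. repeat split; auto; lra.
Qed.

Section BelowLevel.

Variables (k : nat) (T : Rbar) (t1 t2 Rad : R).
Hypotheses (Ht1 : 0 <= t1) (Ht2 : Rbar_lt t2 T) (HRad : Rad <= 1).
Variables (h h1 h2 : R -> R -> R) (G : R -> R -> Prop) (C s : R).
Hypotheses (Hh : classical_solution k T h) (Hh1 : classical_solution k T h1)
  (ch2 : cont2_on (rect 0 Rad t1 t2) h2) (Hax : axis_condition T h h1)
  (HG : path_component (region Rad t1 t2 h h1 h2) G)
  (HC2 : forall r t, closure2 G r t -> C < h2 r t)
  (Hno : forall r t, G r t -> r <> 0 /\ r <> Rad /\ t <> t1)
  (Hs : forall r t, closure2 G r t -> t <= s -> h r t <> C).

Local Notation Q := (rect 0 Rad t1 t2).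

Let K r t := (closure2 G r t /\ t <= s) /\ h r t <= C.

Let Q_dom r t : Q r t -> dom_cl T r t := rect_dom_cl T Rad t1 t2 r t Ht1 Ht2 HRad.
Let ch : cont2_on Q h := cont2_restrict _ _ h Q_dom (proj1 Hh).
Let ch1 : cont2_on Q h1 := cont2_restrict _ _ h1 Q_dom (proj1 Hh1).

Lemma G_rect r t : G r t -> Q r t.
Proof. intros Grt. exact (region_rect _ _ _ _ _ _ _ _ (proj1 (proj2 HG) r t Grt)). Qed.

Lemma K_rect r t : K r t -> Q r t.
Proof. intros [[Hcl _] _]. exact (closure2_rect G 0 Rad t1 t2 r t G_rect Hcl). Qed.

Lemma K_closed : closed2 K.
Proof.
  assert (cQ : forall f, cont2_on Q f -> cont2_on (fun r t => closure2 G r t /\ t <= s) f)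
    by (intros f; apply cont2_restrict; intros r t [Hcl _];
        exact (closure2_rect G 0 Rad t1 t2 r t G_rect Hcl)).
  apply closed2_le; [|apply cQ, ch|apply cont2_const].
  apply closed2_le; [apply closed2_closure2|apply cont2_t|apply cont2_const].
Qed.

Lemma K_lt_C r t : K r t -> h r t < C.
Proof.
  intros [[Hcl Hts] Hle]. destruct Hle as [Hlt|Heq]; auto. contradiction (Hs r t Hcl Hts Heq).
Qed.

Lemma K_h1_le r t : K r t -> h1 r t <= h r t.
Proof.
  intros Krt. apply (closure2_le Q G h1 h r t ch1 ch G_rect (K_rect r t Krt)).
  - intros r' t' G'. destruct (proj1 (proj2 HG) r' t' G') as [_ [_ [? ?]]]. lra.
  - exact (proj1 (proj1 Krt)).
Qed.

Lemma K_G r t : K r t -> h1 r t < h r t -> G r t.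
Proof.
  intros Krt Hlt. assert (Hcl := proj1 (proj1 Krt)).
  apply (path_component_closure Rad t1 t2 h h1 h2 ch ch1 ch2 G r t HG Hcl).
  destruct (K_rect r t Krt) as [Hr Ht].
  assert (HC2' := HC2 r t Hcl). assert (Hlt' := K_lt_C r t Krt).
  repeat split; auto; lra.
Qed.

Lemma K_backward_nbhd r0 t0 : G r0 t0 -> K r0 t0 ->
  exists d, 0 < d /\ forall r t, Rabs (r - r0) < d -> Rabs (t - t0) < d -> t <= t0 -> K r t.
Proof.
  intros G0 K0.
  destruct (Hno r0 t0 G0) as [N1 [N2 N3]].
  destruct (G_rect r0 t0 G0) as [[R1 R2] [T1 T2]].
  destruct (path_component_nbhd Rad t1 t2 h h1 h2 ch ch1 ch2 G r0 t0 HG G0) as [d1 [Hd1 P1]].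
  assert (HC := K_lt_C r0 t0 K0).
  destruct (ch r0 t0 (G_rect r0 t0 G0) (C - h r0 t0) ltac:(lra)) as [d2 [Hd2 P2]].
  set (d := Rmin (Rmin d1 d2) (Rmin (Rmin r0 (Rad - r0)) (t0 - t1))).
  assert (M1 := Rmin_l (Rmin d1 d2) (Rmin (Rmin r0 (Rad - r0)) (t0 - t1))).
  assert (M2 := Rmin_r (Rmin d1 d2) (Rmin (Rmin r0 (Rad - r0)) (t0 - t1))).
  assert (M3 := Rmin_l d1 d2). assert (M4 := Rmin_r d1 d2).
  assert (M5 := Rmin_l (Rmin r0 (Rad - r0)) (t0 - t1)).
  assert (M6 := Rmin_r (Rmin r0 (Rad - r0)) (t0 - t1)).
  assert (M7 := Rmin_l r0 (Rad - r0)). assert (M8 := Rmin_r r0 (Rad - r0)).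
  fold d in M1, M2.
  exists d. split; [unfold d; repeat apply Rmin_pos; lra|].
  intros r t A1 A2 A3.
  assert (Qrt : Q r t) by (apply Rabs_def2 in A1, A2; repeat split; lra).
  assert (B := P2 r t Qrt ltac:(lra) ltac:(lra)). apply Rabs_def2 in B.
  destruct K0 as [[_ Hs0] _].
  repeat split; [apply closure2_of, P1; auto; lra|lra|lra].
Qed.

Lemma no_point_below_level rq tq : G rq tq -> tq <= s -> h rq tq < C -> False.
Proof.
  intros Gq Hq HqC.
  assert (Kq : K rq tq) by (repeat split; [apply closure2_of; auto|auto|lra]).
  destruct (axis_sin_margin T h h1 K Rad t1 t2 Ht1 Ht2 K_closed K_rect
              (cont2_restrict _ _ h K_rect ch) (cont2_restrict _ _ h1 K_rect ch1) Hax K_h1_le)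
    as [del [Hdel Pdel]].
  { intros t K0. destruct (K_h1_le 0 t K0) as [Hlt|Heq]; auto.
    destruct (Hno 0 t (K_G 0 t K0 Hlt)) as [N _]. contradiction N; reflexivity. }
  set (lam := INR k ^ 2 / del ^ 2 + 1).
  assert (cW : cont2_on K (weighted_gap lam h h1)).
  { apply cont2_mult.
    - apply cont2_fun_t. intros r t _. apply ex_derive_continuity_pt. auto_derive; auto.
    - apply cont2_restrict with Q; [exact K_rect|]. apply cont2_minus; auto. }
  destruct (cont2_on_attains_max K (weighted_gap lam h h1) 0 Rad t1 t2
              ltac:(exists rq, tq; exact Kq) K_rect K_closed cW) as [rs [ts [Ks Wmax]]].
  assert (Hgap : h1 rs ts < h rs ts).
  { assert (W0 : 0 < weighted_gap lam h h1 rq tq)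
      by (unfold weighted_gap; apply Rmult_lt_0_compat; [apply exp_pos|];
          destruct (proj1 (proj2 HG) rq tq Gq) as [_ [_ [? ?]]]; lra).
    assert (W1 := Wmax rq tq Kq). unfold weighted_gap in W0, W1.
    assert (E := exp_pos (- (lam * ts))). nra. }
  assert (Gs : G rs ts) by exact (K_G rs ts Ks Hgap).
  destruct (K_backward_nbhd rs ts Gs Ks) as [d [Hd Pd]].
  destruct (Hno rs ts Gs) as [N1 [N2 N3]].
  destruct (G_rect rs ts Gs) as [[R1 R2] [T1 T2]].
  refine (weighted_gap_no_backward_max k T h h1 del rs ts d Hh Hh1 Hdel _ Hd Hgap
            (Pdel rs ts Ks) (fun r t A1 A2 A3 => Wmax r t (Pd r t A1 A2 A3))).
  repeat split; try lra.
  apply Rbar_le_lt_trans with (Finite t2); [simpl; lra|auto].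
Qed.

End BelowLevel.

Lemma classical_solution_opp k T h :
  classical_solution k T h -> classical_solution k T (fun r t => - h r t).
Proof.
  intros [Hc [hr [hrr [ht [Hd [Hco [Chr [Chrr [Cht Hpde]]]]]]]]].
  split; [apply cont2_opp; auto|].
  exists (fun r t => - hr r t), (fun r t => - hrr r t), (fun r t => - ht r t).
  split.
  { intros r t Hrt. destruct (Hd r t Hrt) as [A [B C]].
    split; [|split]; [exact (is_derive_opp _ _ _ A)|exact (is_derive_opp _ _ _ B)
                     |exact (is_derive_opp _ _ _ C)]. }
  repeat split; try (apply cont2_opp; assumption).
  intros r t Hrt. rewrite (Hpde r t Hrt).
  replace (2 * - h r t) with (- (2 * h r t)) by ring. rewrite sin_neg.
  destruct Hrt as [[? ?] _]. field. lra.
Qed.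

Lemma axis_condition_opp T h h1 :
  axis_condition T h h1 -> axis_condition T (fun r t => - h r t) (fun r t => - h1 r t).
Proof.
  intros [A | [m A]].
  - left. intros t Ht HT E. apply (A t Ht HT). lra.
  - right. exists (- m)%Z. intros t Ht HT. destruct (A t Ht HT) as [E1 E2].
    rewrite opp_IZR. split; lra.
Qed.

Lemma region_opp Rad t1 t2 h h1 h2 :
  region Rad t1 t2 (fun r t => - h r t) (fun r t => - h2 r t) (fun r t => - h1 r t) =
  region Rad t1 t2 h h1 h2.
Proof.
  apply functional_extensionality; intro r. apply functional_extensionality; intro t.
  apply propositional_extensionality. unfold region.
  split; intros [A [B [C D]]]; repeat split; auto; lra.
Qed.

Lemma component_meets_parabolic_boundary (k : nat) (T : Rbar) (t1 t2 Rad : R)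
  (h h1 h2 : R -> R -> R) (G : R -> R -> Prop) (C : R) :
  0 <= t1 -> Rbar_lt t2 T -> Rad <= 1 ->
  classical_solution k T h -> classical_solution k T h1 -> classical_solution k T h2 ->
  axis_condition T h h1 -> axis_condition T h h2 ->
  path_component (region Rad t1 t2 h h1 h2) G ->
  (forall r t, closure2 G r t -> h1 r t < C) -> (forall r t, closure2 G r t -> C < h2 r t) ->
  exists r t, G r t /\ (r = 0 \/ r = Rad \/ t = t1).
Proof.
  intros Ht1 Ht2 HRad Hh Hh1 Hh2 Ax1 Ax2 HG HC1 HC2.
  apply NNPP; intro Hneg.
  assert (Hno : forall r t, G r t -> r <> 0 /\ r <> Rad /\ t <> t1)
    by (intros r t Grt; repeat split; intro E; apply Hneg; exists r, t; auto).
  assert (Qdom := fun r t => rect_dom_cl T Rad t1 t2 r t Ht1 Ht2 HRad).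
  assert (cQ : forall f, classical_solution k T f -> cont2_on (rect 0 Rad t1 t2) f)
    by (intros f Hf; exact (cont2_restrict _ _ f Qdom (proj1 Hf))).
  destruct (level_free_time Rad t1 t2 h h1 h2 G C (cQ h Hh) (cQ h1 Hh1) (cQ h2 Hh2) HG HC1 HC2
              (fun r t Grt => proj2 (proj2 (Hno r t Grt)))) as [s [rq [tq [Gq [Hq Hs]]]]].
  assert (Hhq : h rq tq <> C) by (apply Hs; auto; apply closure2_of; auto).
  destruct (Rlt_or_le (h rq tq) C) as [Lt|Ge].
  - exact (no_point_below_level k T t1 t2 Rad Ht1 Ht2 HRad h h1 h2 G C s Hh Hh1 (cQ h2 Hh2)
             Ax1 HG HC2 Hno Hs rq tq Gq Hq Lt).
  - refine (no_point_below_level k T t1 t2 Rad Ht1 Ht2 HRad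
              (fun r t => - h r t) (fun r t => - h2 r t) (fun r t => - h1 r t) G (- C) s
              (classical_solution_opp k T h Hh) (classical_solution_opp k T h2 Hh2)
              (cont2_opp _ _ (cQ h1 Hh1)) (axis_condition_opp T h h2 Ax2) _ _ Hno _ rq tq Gq Hq _).
    + rewrite region_opp; exact HG.
    + intros r t H; specialize (HC1 r t H); lra.
    + intros r t H1 H2 H3; apply (Hs r t H1 H2); lra.
    + lra.
Qed.

Lemma stationary_solution k T (f f' f'' : R -> R) :
  (forall r, 0 <= r <= 1 -> continuity_pt f r) ->
  (forall r, 0 < r < 1 -> is_derive f r (f' r) /\ is_derive f' r (f'' r) /\ continuity_pt f'' r) ->
  (forall r, 0 < r < 1 -> f'' r + f' r / r = INR k ^ 2 * sin (2 * f r) / (2 * r ^ 2)) ->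
  classical_solution k T (fun r _ => f r).
Proof.
  intros Cf Df Ode.
  split; [apply cont2_fun_r; intros r t [Hr _]; auto|].
  exists (fun r _ => f' r), (fun r _ => f'' r), (fun _ _ => 0).
  split.
  { intros r t [Hr _]. destruct (Df r Hr) as [D1 [D2 _]].
    split; [|split]; auto. apply (is_derive_const (f r) t). }
  split; [apply cont2_fun_r; intros r t [Hr _]; apply Cf; lra|].
  split; [apply cont2_fun_r; intros r t [Hr _];
          apply ex_derive_continuity_pt; eexists; apply (Df r Hr)|].
  split; [apply cont2_fun_r; intros r t [Hr _]; apply (Df r Hr)|].
  split; [apply cont2_const|].
  intros r t [Hr _]. specialize (Ode r Hr). lra.
Qed.

Lemma const_solution k T c : sin (2 * c) = 0 -> classical_solution k T (fun _ _ => c).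
Proof.
  intros Hs. apply (stationary_solution k T (fun _ => c) (fun _ => 0) (fun _ => 0)).
  - intros r _. apply continuity_pt_const. intros x y; reflexivity.
  - intros r _. repeat split; try apply (is_derive_const c r); try apply (is_derive_const 0 r).
    apply continuity_pt_const. intros x y; reflexivity.
  - intros r Hr. rewrite Hs. field. lra.
Qed.

Lemma sin_double_pi_sub_double_atan u :
  sin (2 * (PI - 2 * atan u)) = - (4 * u * (1 - u * u) / ((1 + u * u) * (1 + u * u))).
Proof.
  replace (2 * (PI - 2 * atan u)) with (2 * PI - 2 * (2 * atan u)) by ring.
  rewrite sin_minus, sin_2PI, cos_2PI.
  rewrite (sin_2a (2 * atan u)), (cos_2a (atan u)), (sin_2a (atan u)), sin_atan, cos_atan.
  assert (Hp : 0 < 1 + u²) by (assert (0 <= u²) by apply Rle_0_sqr; lra).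
  assert (Hq : sqrt (1 + u²) * sqrt (1 + u²) = 1 + u * u)
    by (rewrite sqrt_sqrt; [unfold Rsqr; ring|lra]).
  assert (Hq0 : 0 < sqrt (1 + u²)) by (apply sqrt_lt_R0; lra).
  rewrite <- Hq. field. lra.
Qed.

Lemma chi_solution k T alpha : classical_solution k T (chi k alpha).
Proof.
  destruct k as [|n].
  { change (classical_solution 0 T (fun _ _ => PI - 2 * atan (1 * 1))).
    apply const_solution. rewrite Rmult_1_l, atan_1.
    replace (2 * (PI - 2 * (PI / 4))) with PI by field. apply sin_PI. }
  set (a := alpha ^ S n). set (K := INR (S n)).
  set (u := fun r => a * r ^ S n).
  set (f' := fun r => -2 * K * u r / (r * (1 + u r * u r))).
  set (f'' := fun r => -2 * K * u r * ((K - 1) - (K + 1) * (u r * u r))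
                         / (r * r * ((1 + u r * u r) * (1 + u r * u r)))).
  assert (Hpos : forall r, 0 < 1 + u r * u r) by (intros r; assert (0 <= u r * u r) by nra; lra).
  assert (HposS : forall r, 0 < 1 + a * (r * r ^ n) * (a * (r * r ^ n)))
    by (intros r; assert (P := Hpos r); unfold u in P; rewrite <- tech_pow_Rmult in P; exact P).
  assert (D1 : forall r, r <> 0 -> is_derive (fun s => PI - 2 * atan (a * s ^ S n)) r (f' r)).
  { intros r Hr. auto_derive; [auto|].
    change (match n with 0%nat => 1 | S _ => INR n + 1 end) with K.
    unfold f', u. rewrite <- !tech_pow_Rmult. field. split; auto. specialize (HposS r). lra. }
  assert (D2 : forall r, r <> 0 -> is_derive f' r (f'' r)).
  { intros r Hr. unfold f', f'', u. auto_derive.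
    - apply Rmult_integral_contrapositive. split; [auto|]. specialize (HposS r). lra.
    - change (match n with 0%nat => 1 | S _ => INR n + 1 end) with K.
      try rewrite <- !tech_pow_Rmult. field. split; auto. specialize (HposS r). lra. }
  assert (C2 : forall r, r <> 0 -> continuity_pt f'' r).
  { intros r Hr. apply ex_derive_continuity_pt.
    unfold f'', u. auto_derive. specialize (HposS r).
    apply Rmult_integral_contrapositive; split;
      apply Rmult_integral_contrapositive; split; auto; lra. }
  apply (stationary_solution (S n) T (fun r => PI - 2 * atan (a * r ^ S n)) f' f'').
  - intros r _. apply ex_derive_continuity_pt. auto_derive; auto.
  - intros r Hr. assert (r <> 0) by lra. auto.
  - intros r Hr. rewrite sin_double_pi_sub_double_atan. fold K.
    specialize (Hpos r). unfold f', f'', u in *. rewrite <- !tech_pow_Rmult in *.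
    field. split; [lra|]. lra.
Qed.

Lemma chi_pos k alpha r t : 0 < chi k alpha r t.
Proof. unfold chi. destruct (atan_bound (alpha ^ k * r ^ k)). lra. Qed.

Lemma chi_lt_PI k alpha r t : 0 < alpha -> 0 < r -> chi k alpha r t < PI.
Proof.
  intros Ha Hr. unfold chi.
  assert (Hu : 0 < alpha ^ k * r ^ k) by (apply Rmult_lt_0_compat; apply pow_lt; auto).
  assert (0 < atan (alpha ^ k * r ^ k)) by (rewrite <- atan_0; apply atan_increasing; auto).
  lra.
Qed.

Lemma level_between Rad t1 t2 (h h1 : R -> R -> R) (G : R -> R -> Prop) :
  cont2_on (rect 0 Rad t1 t2) h -> cont2_on (rect 0 Rad t1 t2) h1 ->
  (forall t, t1 <= t <= t2 -> h 0 t = 0) ->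
  (forall r t, 0 < h1 r t) -> (forall r t, 0 < r -> h1 r t < PI) ->
  path_component (region Rad t1 t2 h h1 (fun _ _ => PI)) G ->
  exists C, (forall r t, closure2 G r t -> h1 r t < C) /\ (forall r t, closure2 G r t -> C < PI).
Proof.
  intros ch ch1 H0 Pos1 Lt1 [[r [t Grt]] [GS _]].
  assert (GQ : forall r t, G r t -> rect 0 Rad t1 t2 r t)
    by (intros r' t' G'; exact (region_rect _ _ _ _ _ _ _ _ (GS r' t' G'))).
  assert (clGQ : forall r t, closure2 G r t -> rect 0 Rad t1 t2 r t)
    by (intros r' t'; apply closure2_rect; auto).
  destruct (cont2_on_attains_max (closure2 G) h1 0 Rad t1 t2
              ltac:(exists r, t; apply closure2_of; auto) clGQ (closed2_closure2 G)
              (cont2_restrict _ _ h1 clGQ ch1)) as [r0 [t0 [Cl0 Max]]].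
  assert (Hr0 : 0 < r0).
  { destruct (clGQ r0 t0 Cl0) as [[[Hr0|Hr0] _] [Ht0 Ht0']]; auto. subst r0.
    assert (Le : h1 0 t0 <= h 0 t0).
    { apply (closure2_le _ G h1 h 0 t0 ch1 ch GQ (clGQ _ _ Cl0)); auto.
      intros r' t' G'. destruct (GS r' t' G') as [_ [_ [? _]]]. lra. }
    rewrite H0 in Le by lra. specialize (Pos1 0 t0). lra. }
  assert (Lt := Lt1 r0 t0 Hr0).
  exists ((h1 r0 t0 + PI) / 2). split; intros r' t' Cl'; specialize (Max r' t' Cl'); lra.
Qed.

Theorem mainTheorem17 (k : nat) (T : Rbar) (t1 t2 Rad : R)
  (Ht : 0 <= t1 < t2) (HtT : Rbar_lt (Finite t2) T) (HR : 0 < Rad <= 1) :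
  (forall h h1 h2 : R -> R -> R,
     classical_solution k T h -> classical_solution k T h1 -> classical_solution k T h2 ->
     axis_condition T h h1 -> axis_condition T h h2 ->
     forall G : R -> R -> Prop,
       path_component (region Rad t1 t2 h h1 h2) G ->
       forall C : R,
         (forall r t, closure2 G r t -> h1 r t < C) ->
         (forall r t, closure2 G r t -> C < h2 r t) ->
         exists r t, G r t /\ (r = 0 \/ r = Rad \/ t = t1))
  /\
  (forall h : R -> R -> R,
     classical_solution k T h ->
     (forall t, 0 <= t -> Rbar_lt (Finite t) T -> h 0 t = 0) ->
     forall h1 : R -> R -> R,
       (h1 = (fun _ _ => PI / 2) \/ exists alpha, 0 < alpha /\ h1 = chi k alpha) ->
       classical_solution k T h1 /\ classical_solution k T (fun _ _ => PI) /\
       axis_condition T h h1 /\ axis_condition T h (fun _ _ => PI) /\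
       forall G : R -> R -> Prop,
         path_component (region Rad t1 t2 h h1 (fun _ _ => PI)) G ->
         exists C : R,
           (forall r t, closure2 G r t -> h1 r t < C) /\
           (forall r t, closure2 G r t -> C < PI)).
Proof.
  assert (Dom : forall r t, rect 0 Rad t1 t2 r t -> dom_cl T r t)
    by (intros r t; apply rect_dom_cl; auto; lra).
  split.
  - intros h h1 h2 Hh Hh1 Hh2 Ax1 Ax2 G HG C HC1 HC2.
    apply (component_meets_parabolic_boundary k T t1 t2 Rad h h1 h2 G C); auto; lra.
  - intros h Hh H0 h1 Hh1.
    assert (Barrier : classical_solution k T h1 /\ (forall r t, 0 < h1 r t) /\
                      (forall r t, 0 < r -> h1 r t < PI)).
    { destruct Hh1 as [-> | [alpha [Ha ->]]].
      - split; [apply const_solution; replace (2 * (PI / 2)) with PI by field; apply sin_PI|].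
        assert (PI > 0) by apply PI_RGT_0. split; intros; lra.
      - split; [apply chi_solution|split; [apply chi_pos|intros; apply chi_lt_PI; auto]]. }
    destruct Barrier as [Sol1 [Pos1 Lt1]].
    assert (Axis : forall g, (forall t, 0 < g 0 t) -> axis_condition T h g)
      by (intros g Hg; left; intros t Ht0 HT; rewrite (H0 t Ht0 HT); specialize (Hg t); lra).
    split; [exact Sol1|split; [apply const_solution, sin_2PI|split; [apply Axis, Pos1|split]]].
    + apply Axis. intros; apply PI_RGT_0.
    + intros G HG. apply (level_between Rad t1 t2 h h1 G); auto.
      * exact (cont2_restrict _ _ h Dom (proj1 Hh)).
      * exact (cont2_restrict _ _ h1 Dom (proj1 Sol1)).
      * intros t Ht'. apply H0; [lra|apply (Dom 0 t); repeat split; lra].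
Qed.
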